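(* For every subinterval $I$ of $(e/(e+1),1]$ with rational endpoints, with $I^\tau=\{1-e(1-t):t\in I\}$, we have $\mathfrak s^0_{\rm rig}(\mathfrak Y_{\rm rig}I)\subseteq\pi_{2,\rm rig}^{-1}(\mathfrak Y_{\rm rig}I^\tau)$; more precisely, $$\mathfrak s^0_{\rm rig}(\mathfrak Y_{\rm rig}I)=\pi_{2,\rm rig}^{-1}(\mathfrak Y_{\rm rig}I^\tau)\cap\pi_{1,\rm rig}^{-1}(\mathfrak Y_{\rm rig}I).$$
   Context: $p$ prime; $L_0/\mathbb Q_p$ finite, ring of integers $\mathcal O_0$, uniformizer $\varpi$, residue field $\kappa\cong\mathbb F_q$; $\mathrm{val}(\varpi)=1$. $X,Y$ curves over $\mathcal O_0$ (reduced, flat separated finite type, connected one-dimensional geometric fibres), $\pi:Y\to X$ with: $X$ smooth; $Y$ regular; $\pi\otimes\kappa$ has a section $s$; $Y\otimes\kappa$ reduced with two components meeting at $\kappa$-rational points with completed local ring $\cong\kappa[[u,v]]/(uv)$, each singular point the only point over its image; $w$ an $\mathcal O_0$-automorphism of $Y$ whose reduction interchanges the components; $\pi$ finite flat of degree $1+e$, $e>1$. $\mathfrak X_{\rm rig},\mathfrak Y_{\rm rig}$ generic fibres of the formal completions. Measures of singularity (Goren–Kassaei): $\nu_{\mathfrak Y}$ on $\mathfrak Y_{\rm rig}$ (values in $\mathbb Q\cap[0,1]$; $0$/$1$ on points specializing to nonsingular points of $s(X\otimes\kappa)$/the other component; normalized annulus-parameter valuation on residue annuli of singular points) and $\nu_{\mathfrak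 X}$ on $\mathfrak X_{\rm rig}$; $\mathfrak Y_{\rm rig}I=\{\nu_{\mathfrak Y}\in I\}$. Known: if $\nu_{\mathfrak Y}(Q)<e/(e+1)$ (''canonical'') then $\nu_{\mathfrak Y}(Q)=\nu_{\mathfrak X}(\pi_{\rm rig}Q)$, canonical points forming the image of a section $\mathfrak s_{\rm rig}:\mathfrak X_{\rm rig}[0,e/(e+1))\to\mathfrak Y_{\rm rig}[0,e/(e+1))$ of $\pi_{\rm rig}$; if $\nu_{\mathfrak Y}(Q)>e/(e+1)$ (''anti-canonical'') then $\nu_{\mathfrak Y}(Q)=1-e^{-1}\nu_{\mathfrak X}(\pi_{\rm rig}Q)$; $\nu_{\mathfrak Y}(Q)=e/(e+1)$ iff $\nu_{\mathfrak X}(\pi_{\rm rig}Q)\ge e/(e+1)$; $\nu_{\mathfrak Y}(w_{\rm rig}Q)=1-\nu_{\mathfrak Y}(Q)$. $\mathfrak Y^0_{\rm rig}$ is a rigid curve over $L_0$ with finite flat $\pi_{1,\rm rig},\pi'_{1,\rm rig}:\mathfrak Y^0_{\rm rig}\to\mathfrak Y_{\rm rig}$, $\pi_{\rm rig}\pi_{1,\rm rig}=\pi_{\rm rig}\pi'_{1,\rm rig}$, $\pi_{1,\rm rig}(Q)\ne\pi'_{1,\rm rig}(Q)$ for all points $Q$ (so one canonical forces the other anti-canonical); $\pi_{2,\rm rig}:=w_{\rm rig}\pi'_{1,\rm rig}$. The commutative square with top arrow $\pi_{1,\rm rig}:(\pi'_{1,\rm rig})^{-1}(\mathfrak Y_{\rm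 rig}[0,e/(e+1)))\to\mathfrak Y_{\rm rig}(e/(e+1),1]$, left arrow $\pi'_{1,\rm rig}$ to $\mathfrak Y_{\rm rig}[0,e/(e+1))$, and $\pi_{\rm rig}$ from both of these to $\mathfrak X_{\rm rig}[0,e/(e+1))$ is a fibre product square; equivalently its top arrow is an isomorphism, whose inverse is denoted $\mathfrak s^0_{\rm rig}:\mathfrak Y_{\rm rig}(e/(e+1),1]\to\mathfrak Y^0_{\rm rig}$ (a section of $\pi_{1,\rm rig}$ with image $(\pi'_{1,\rm rig})^{-1}(\mathfrak Y_{\rm rig}[0,e/(e+1)))$). *)

From mathcomp Require Import all_boot all_order all_algebra.
Set Implicit Arguments. Unset Strict Implicit. Unset Printing Implicit Defensive.
Import Order.TTheory GRing.Theory Num.Theory.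
Local Open Scope ring_scope.

Definition tau_mem (e : nat) (I : interval rat) (s : rat) : Prop :=
  exists2 t : rat, t \in I & s = 1 - e%:R * (1 - t).

From mathcomp Require Import all_boot all_order all_algebra.
From mathcomp Require Import ring lra.
Set Implicit Arguments. Unset Strict Implicit. Unset Printing Implicit Defensive.
Import Order.TTheory GRing.Theory Num.Theory.
Local Open Scope ring_scope.

(* Write c = e/(e+1).  For anti-canonical Q the point R = s0 Q has pi1 R = Q
   and canonical pi1' R, so nu(pi1' R) = nu_X(pi Q) = e (1 - nu Q) and hence
   nu(pi2 R) = 1 - e (1 - nu Q): the twist t |-> 1 - e (1 - t).  Conversely,
   if nu(pi2 R) = 1 - e (1 - t) with t > c, then nu(pi1' R) = e (1 - t) < c, so
   R lies in the image of s0, i.e. R = s0 (pi1 R). *)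

Lemma eq_mul_oneB (R : fieldType) (a x y : R) :
  a != 0 -> y = 1 - a^-1 * x -> x = a * (1 - y).
Proof. by move=> a0 ->; rewrite opprB addrC subrK mulrA divff ?mul1r. Qed.

Lemma mul_oneB_lt_ratio (R : realFieldType) (a t : R) :
  0 < a -> a / (a + 1) < t -> a * (1 - t) < a / (a + 1).
Proof.
move=> a_gt0; rewrite ltr_pdivrMr ?ltr_pdivlMr; try lra.
by move=> ?; nra.
Qed.

Section TwistedSection.

Variables (PX PY PY0 : Type) (e : nat).
Hypothesis e_gt1 : (1 < e)%N.
Variables (pi : PY -> PX) (w : PY -> PY) (pi1 pi1' : PY0 -> PY).
Variables (nuY : PY -> rat) (nuX : PX -> rat) (s0 : PY -> PY0).

Let c : rat := e%:R / (e%:R + 1).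

Hypothesis nuY_w : forall Q, nuY (w Q) = 1 - nuY Q.
Hypothesis pi_pi1 : forall R, pi (pi1 R) = pi (pi1' R).
Hypothesis nu_canonical : forall Q, nuY Q < c -> nuY Q = nuX (pi Q).
Hypothesis nu_anti_canonical :
  forall Q, c < nuY Q -> nuY Q = 1 - (e%:R)^-1 * nuX (pi Q).
Hypothesis pi1_s0 : forall Q, c < nuY Q -> pi1 (s0 Q) = Q.
Hypothesis s0_image :
  forall R, nuY (pi1' R) < c <-> exists2 Q, c < nuY Q & s0 Q = R.

Lemma nu_pi2_s0 Q : c < nuY Q -> nuY (w (pi1' (s0 Q))) = 1 - e%:R * (1 - nuY Q).
Proof.
move=> Q_anti.
have can_s0 : nuY (pi1' (s0 Q)) < c by apply/s0_image; exists Q.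
rewrite nuY_w nu_canonical // -pi_pi1 pi1_s0 //.
by rewrite -(eq_mul_oneB _ (nu_anti_canonical Q_anti)) // pnatr_eq0 -lt0n ltnW.
Qed.

Lemma s0_pi1_of_nu_pi2 R t :
  c < t -> nuY (w (pi1' R)) = 1 - e%:R * (1 - t) ->
  s0 (pi1 R) = R.
Proof.
move=> t_anti; rewrite nuY_w => nu_pi2R.
have can_pi1'R : nuY (pi1' R) < c.
  have -> : nuY (pi1' R) = e%:R * (1 - t) by lra.
  by apply: mul_oneB_lt_ratio; rewrite // ltr0n ltnW.
have [Q Q_anti <-] := (s0_image R).1 can_pi1'R.
by rewrite pi1_s0.
Qed.

End TwistedSection.

Theorem corollary2p8
  (* points of X_rig, Y_rig, Y^0_rig *)
  (PX PY PY0 : Type) (e : nat) (he : (1 < e)%N)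
  (pi : PY -> PX) (w : PY -> PY) (pi1 pi1' : PY0 -> PY)
  (nuY : PY -> rat) (nuX : PX -> rat) (s0 : PY -> PY0)
  (* measures of singularity take values in [0,1] *)
  (hnuY : forall Q, 0 <= nuY Q <= 1)
  (hnuX : forall P, 0 <= nuX P <= 1)
  (* canonical points *)
  (hcan : forall Q, nuY Q < e%:R / (e%:R + 1) -> nuY Q = nuX (pi Q))
  (* anti-canonical points *)
  (hanti : forall Q, e%:R / (e%:R + 1) < nuY Q ->
             nuY Q = 1 - (e%:R)^-1 * nuX (pi Q))
  (hmid : forall Q, nuY Q = e%:R / (e%:R + 1) <-> e%:R / (e%:R + 1) <= nuX (pi Q))
  (* w_rig *)
  (hw : forall Q, nuY (w Q) = 1 - nuY Q)
  (* pi_rig o pi1_rig = pi_rig o pi1'_rig, and pi1 Q <> pi1' Q *)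
  (hcomm : forall R, pi (pi1 R) = pi (pi1' R))
  (hneq : forall R, pi1 R <> pi1' R)
  (* s0_rig : Y_rig(e/(e+1),1] -> Y^0_rig is a section of pi1_rig with
     image (pi1'_rig)^{-1}(Y_rig[0,e/(e+1))) *)
  (hsec : forall Q, e%:R / (e%:R + 1) < nuY Q -> pi1 (s0 Q) = Q)
  (himg : forall R, nuY (pi1' R) < e%:R / (e%:R + 1) <->
            exists2 Q, e%:R / (e%:R + 1) < nuY Q & s0 Q = R)
  (I : interval rat)
  (hI : forall t, t \in I -> e%:R / (e%:R + 1) < t <= 1) :
  let pi2 := fun R => w (pi1' R) in
  (forall Q, nuY Q \in I -> tau_mem e I (nuY (pi2 (s0 Q))))
  /\
  (forall R, (exists2 Q, nuY Q \in I & s0 Q = R) <->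
             (tau_mem e I (nuY (pi2 R)) /\ nuY (pi1 R) \in I)).
Proof.
move=> pi2.
have anti_of_I t : t \in I -> e%:R / (e%:R + 1) < t by case/hI/andP.
have s0_twist Q : nuY Q \in I -> tau_mem e I (nuY (pi2 (s0 Q))).
  by move=> QI; exists (nuY Q); rewrite // (nu_pi2_s0 he hw hcomm hcan hanti hsec himg) ?anti_of_I.
split=> // R; split.
  case=> Q QI <-; split; first exact: s0_twist.
  by rewrite hsec ?anti_of_I.
case=> -[t tI nu_pi2R] pi1RI.
have s0_pi1R := s0_pi1_of_nu_pi2 he hw hsec himg (anti_of_I _ tI) nu_pi2R.
by exists (pi1 R).
Qed.
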